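(* Let $a\neq0$, $b>0$, $d$ be integers with $d$ not a perfect square, $\alpha=a+b^2\sqrt d$, $N_\alpha=a^2-b^4d$ not a perfect square, $\varepsilon=(t+u\sqrt d)/2$ in the ring of integers of $\mathbb{Q}(\sqrt d)$ with $t,u$ nonzero integers, and let $x\ne0$, $y>0$ be integers with $x+y^2\sqrt d=\alpha\varepsilon^2$. Let $r_1=tb^2+au\pm2by$ (for either choice of sign) and $s_1'=-u\sqrt{N_\alpha/\operatorname{core}(N_\alpha)}$. Then $\gcd\big(4b^2r_1/\operatorname{core}(r_1),\,r_1^2\big)$ divides $s_1'^2$.
   Context: For a nonzero integer $n$, $\operatorname{core}(n)$ is the unique squarefree integer with $n/\operatorname{core}(n)$ a perfect square, $\operatorname{core}(1)=1$. Note $N_\alpha/\operatorname{core}(N_\alpha)$ is a positive perfect square, so $s_1'$ is an integer. *)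

From mathcomp Require Import all_boot all_order all_algebra all_field.
Set Implicit Arguments. Unset Strict Implicit. Unset Printing Implicit Defensive.
Import Order.TTheory GRing.Theory Num.Theory.

Definition core_nat (m : nat) : nat :=
  (\prod_(p <- primes m) p ^ (logn p m %% 2))%N.

(* core n for a nonzero integer n: the unique squarefree integer (same sign
   as n) with n / core n a perfect square; core 1 = 1.  (core 0 = 0 is a
   junk value, never used under the hypotheses of the statement.) *)
Definition core (n : int) : int := (sgz n * (core_nat `|n|%N)%:Z)%R.

Definition is_square (n : int) : Prop := exists k : int, n = (k ^+ 2)%R.

(* Put r2 = 2 (t b^2 + a u) - r1.  Comparing the coefficients of sqrt d in
   x + y^2 sqrt d = alpha eps^2 gives 4 y^2 = 2 a t u + b^2 (t^2 + u^2 d), hence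
   r1 r2 = u^2 N_alpha and r1 - r2 = +-4 b y; integrality of eps gives
   4 | t^2 - u^2 d.  The divisibility is checked one prime p at a time.  If
   v_p r1 <= v_p r2, then v_p (r1^2) <= v_p (r1 r2) = v_p (u^2 N_alpha) already
   suffices.  Otherwise v_p r2 = v_p (4 b y) by the ultrametric inequality, and
   4 y^2 = t (r1 + r2) - b^2 (t^2 - u^2 d) forces v_p b <= v_p y, which bounds
   v_p (4 b^2 r1 / core r1) by v_p (r1 r2).  Since core only keeps the parity of
   each valuation, the remaining off-by-one cases are settled by parity. *)

From mathcomp Require Import all_boot all_order all_algebra all_field.
From mathcomp Require Import ring zify.
Set Implicit Arguments.
Unset Strict Implicit.
Unset Printing Implicit Defensive.
Import Order.TTheory GRing.Theory Num.Theory.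

Lemma dvdn_from_log m n : 0 < m -> 0 < n ->
  (forall p, prime p -> logn p m <= logn p n) -> m %| n.
Proof.
move=> m_gt0 n_gt0 le_mn; apply/dvdn_partP => // p; rewrite mem_primes => /andP[p_pr _].
by rewrite p_part pfactor_dvdn // le_mn.
Qed.

Lemma logn_prod_primes p (s : seq nat) (e : nat -> nat) : prime p -> uniq s -> all prime s ->
  logn p (\prod_(q <- s) q ^ e q) = if p \in s then e p else 0.
Proof.
move=> p_pr; elim: s => [|q s IHs] /=; first by rewrite big_nil logn1.
move=> /andP[q_s uniq_s] /andP[q_pr s_pr].
have prod_gt0 : 0 < \prod_(r <- s) r ^ e r.
  by rewrite big_seq prodn_cond_gt0 // => r /(allP s_pr) r_pr; rewrite expn_gt0 prime_gt0.
rewrite big_cons lognM ?expn_gt0 ?(prime_gt0 q_pr) //.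
rewrite lognX logn_prime // IHs // in_cons; case: eqVneq => [-> | _] /=; last by rewrite muln0.
by rewrite (negPf q_s) muln1 addn0.
Qed.

Lemma core_nat_gt0 n : 0 < core_nat n.
Proof.
by rewrite /core_nat big_seq prodn_cond_gt0 // => p; rewrite mem_primes expn_gt0 => /andP[/prime_gt0->].
Qed.

Lemma logn_core_nat p n : prime p -> logn p (core_nat n) = logn p n %% 2.
Proof.
move=> p_pr; rewrite logn_prod_primes ?primes_uniq ?all_prime_primes //.
by case: ifP => // /negbT; rewrite -logn_gt0 -eqn0Ngt => /eqP->.
Qed.

Lemma core_nat_dvdn n : 0 < n -> core_nat n %| n.
Proof.
move=> n_gt0; apply: dvdn_from_log => // [|p p_pr]; first exact: core_nat_gt0.
by rewrite logn_core_nat // leq_mod.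
Qed.

Local Open Scope ring_scope.

Lemma absz_core (z : int) : z != 0 -> `|core z|%N = core_nat `|z|%N.
Proof. by rewrite abszM; case: sgzP => // *; rewrite mul1n. Qed.

Lemma core_dvdz (z : int) : z != 0 -> (core z %| z)%Z.
Proof. by move=> nz_z; rewrite dvdzE absz_core // core_nat_dvdn // absz_gt0. Qed.

Lemma core_neq0 (z : int) : z != 0 -> core z != 0.
Proof. by move=> nz_z; rewrite -absz_gt0 absz_core // core_nat_gt0. Qed.

Definition logz (p : nat) (z : int) : nat := logn p `|z|%N.

Section IntValuation.

Variable p : nat.
Hypothesis p_pr : prime p.

Lemma logzN z : logz p (- z) = logz p z.
Proof. by rewrite /logz abszN. Qed.

Lemma logzM x y : x != 0 -> y != 0 -> logz p (x * y) = (logz p x + logz p y)%N.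
Proof. by move=> nz_x nz_y; rewrite /logz abszM lognM // absz_gt0. Qed.

Lemma logzX x n : logz p (x ^+ n) = (n * logz p x)%N.
Proof. by rewrite /logz abszX lognX. Qed.

Lemma pfactor_dvdz k z : z != 0 -> ((p ^ k)%:Z %| z)%Z = (k <= logz p z)%N.
Proof. by move=> nz_z; rewrite dvdzE /= pfactor_dvdn // absz_gt0. Qed.

Lemma logz_core z : z != 0 -> logz p (core z) = (logz p z %% 2)%N.
Proof. by move=> nz_z; rewrite /logz absz_core // logn_core_nat. Qed.

Lemma logzB_lt x y : x != 0 -> y != 0 -> (logz p y < logz p x)%N ->
  logz p (x - y) = logz p y.
Proof.
move=> nz_x nz_y lt_yx.
have nz_xy : x - y != 0 by apply: contraTneq lt_yx => /eqP; rewrite subr_eq0 => /eqP->; rewrite ltnn.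
have le_y : (logz p y <= logz p (x - y))%N.
  by rewrite -pfactor_dvdz // rpredB // pfactor_dvdz // ltnW.
apply/eqP; rewrite eqn_leq le_y andbT leqNgt; apply/negP => lt_y.
have : ((p ^ (logz p y).+1)%:Z %| x - (x - y))%Z by rewrite rpredB ?pfactor_dvdz.
by rewrite subKr pfactor_dvdz // ltnn.
Qed.

End IntValuation.

Lemma sqrtC_int_Aint (d : int) : sqrtC (d%:~R : algC) \in Aint.
Proof.
apply: (@root_monic_Aint ('X^2 - (d%:~R)%:P)).
- by rewrite /root !hornerE sqrtCK subrr.
- exact: monicXnsubC.
- by rewrite polyOverXnsubC rpred_int.
Qed.

Lemma sqrtC_int_notin_Crat (d : int) : ~ is_square d -> sqrtC (d%:~R : algC) \notin Crat.
Proof.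
move=> nsq_d; apply/negP=> /Cint_rat_Aint/(_ (sqrtC_int_Aint d))/intrP[z def_z].
apply: nsq_d; exists z; apply: (@intr_inj algC).
by rewrite rmorphXn /= -def_z sqrtCK.
Qed.

Lemma int_sqrtC_coef_eq0 (d p q : int) : ~ is_square d ->
  p%:~R + q%:~R * sqrtC d%:~R = 0 :> algC -> q = 0.
Proof.
move=> nsq_d pqs0; apply/eqP; apply: contraNT (sqrtC_int_notin_Crat nsq_d) => nz_q.
have nz_qC : (q%:~R : algC) != 0 by rewrite intr_eq0.
have qs : q%:~R * sqrtC d%:~R = - p%:~R :> algC.
  by apply/eqP; rewrite -addr_eq0 addrC pqs0.
rewrite -[sqrtC _](mulKf nz_qC) qs.
by rewrite rpredM ?rpredN ?rpredV ?rpred_int.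
Qed.

Lemma dvdz_norm_Aint (d t u : int) :
  ((t%:~R + u%:~R * sqrtC d%:~R) / 2 : algC) \in Aint -> (4 %| t ^+ 2 - u ^+ 2 * d)%Z.
Proof.
set s := sqrtC _; set e := (_ / 2 : algC) => Ae.
have norm_e : (t ^+ 2 - u ^+ 2 * d)%:~R / 4 = t%:~R * e - e ^+ 2 :> algC.
  rewrite /e !(rmorphB, rmorphM, rmorphXn) /= -(sqrtCK d%:~R) -/s.
  by field.
have /intrP[m def_m] : ((t ^+ 2 - u ^+ 2 * d)%:~R / 4 : algC) \in Num.int.
  apply: Cint_rat_Aint; first by rewrite rpred_div ?rpred_int ?rpred_nat.
  rewrite norm_e; apply: rpredB; [exact: rpredM (Aint_int t) Ae | exact: rpredX].
apply/dvdzP; exists m; apply: (@intr_inj algC).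
by rewrite rmorphM /= -def_m divfK ?pnatr_eq0.
Qed.

Lemma coef_sqrtC_mul_sqr (d a B t u x Y : int) : ~ is_square d ->
  (x%:~R + Y%:~R * sqrtC d%:~R : algC)
    = (a%:~R + B%:~R * sqrtC d%:~R) * ((t%:~R + u%:~R * sqrtC d%:~R) / 2) ^+ 2 ->
  4 * Y = 2 * a * t * u + B * (t ^+ 2 + u ^+ 2 * d).
Proof.
move=> nsq_d; set s := sqrtC _ => def_x.
apply/eqP; rewrite -subr_eq0; apply/eqP.
apply: (@int_sqrtC_coef_eq0 d (4 * x - (a * (t ^+ 2 + u ^+ 2 * d) + 2 * t * u * B * d))) => //.
rewrite -/s; have -> : 0 = 4 * ((x%:~R + Y%:~R * s) - (a%:~R + B%:~R * s) *
                                  ((t%:~R + u%:~R * s) / 2) ^+ 2) :> algC.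
  by rewrite def_x subrr mulr0.
rewrite !(rmorphB, rmorphD, rmorphM, rmorphXn) /= -(sqrtCK d%:~R) -/s.
by field.
Qed.

Section GcdBound.

Variables a b d t u y r1 k : int.
Hypotheses (nz_b : b != 0) (nz_y : y != 0) (nz_u : u != 0) (nz_r1 : r1 != 0).
Let N := a ^+ 2 - b ^+ 4 * d.
Hypotheses (nz_N : N != 0) (def_k : k ^+ 2 = (N %/ core N)%Z).
Hypothesis coef_y : 4 * y ^+ 2 = 2 * a * t * u + b ^+ 2 * (t ^+ 2 + u ^+ 2 * d).
Hypothesis dvd4_norm : (4 %| t ^+ 2 - u ^+ 2 * d)%Z.
Hypothesis def_r1 :
  r1 = t * b ^+ 2 + a * u + 2 * b * y \/ r1 = t * b ^+ 2 + a * u - 2 * b * y.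

Let r2 := 2 * (t * b ^+ 2 + a * u) - r1.

Lemma r1_mul_r2 : r1 * r2 = u ^+ 2 * N.
Proof.
have -> : r1 * r2 = (t * b ^+ 2 + a * u) ^+ 2 - b ^+ 2 * (4 * y ^+ 2).
  by rewrite /r2; case: def_r1 => ->; ring.
by rewrite coef_y /N; ring.
Qed.

Lemma nz_r2 : r2 != 0.
Proof.
have : u ^+ 2 * N != 0 by rewrite mulf_neq0 ?expf_neq0.
by rewrite -r1_mul_r2 mulf_eq0 negb_or => /andP[].
Qed.

Lemma logz_r1_sub_r2 p : logz p (r1 - r2) = (logz p 4 + logz p b + logz p y)%N.
Proof.
have -> : logz p (r1 - r2) = logz p (4 * b * y).
  rewrite /r2; case: def_r1 => ->; last rewrite -(logzN _ (4 * b * y)).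
    by congr logz; ring.
  by congr logz; ring.
by rewrite !logzM ?mulf_neq0.
Qed.

Section SmallerValuation.

Variable p : nat.
Hypotheses (p_pr : prime p) (lt_r2_r1 : (logz p r2 < logz p r1)%N).

Lemma logz_r2 : logz p r2 = (logz p 4 + logz p b + logz p y)%N.
Proof. by rewrite -logz_r1_sub_r2 (logzB_lt p_pr nz_r1 nz_r2 lt_r2_r1). Qed.

Lemma logz_b_le_y : (logz p b <= logz p y)%N.
Proof.
have def_4y2 : 4 * y ^+ 2 = t * (r1 + r2) - b ^+ 2 * (t ^+ 2 - u ^+ 2 * d).
  by rewrite coef_y /r2; ring.
rewrite leqNgt; apply/negP => lt_y_b.
have nz_4y2 : 4 * y ^+ 2 != 0 by rewrite mulf_neq0 ?expf_neq0.
set K := (logz p (4 * y ^+ 2)).+1.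
have v_4y2 : logz p (4 * y ^+ 2) = (logz p 4 + 2 * logz p y)%N.
  by rewrite logzM ?expf_neq0 ?logzX.
(* [lia] diverges on the nonlinear integer hypotheses of the section: clear them. *)
have K_le_r2 : (K <= logz p r2)%N by rewrite logz_r2 /K v_4y2; clear -lt_y_b; lia.
have : ((p ^ K)%:Z %| 4 * y ^+ 2)%Z.
  rewrite def_4y2; apply: rpredB.
    by rewrite dvdz_mull // rpredD ?pfactor_dvdz ?nz_r2 // (leq_trans K_le_r2 (ltnW lt_r2_r1)).
  apply: (@dvdz_trans (4 * b ^+ 2)).
    by rewrite pfactor_dvdz ?mulf_neq0 ?expf_neq0 // logzM ?expf_neq0 // logzX /K v_4y2; clear -lt_y_b; lia.
  by rewrite mulrC dvdz_mul.
by rewrite pfactor_dvdz // ltnn.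
Qed.

End SmallerValuation.

Let A := ((4 * b ^+ 2 * r1) %/ core r1)%Z.

Lemma A_mul_core : A * core r1 = 4 * b ^+ 2 * r1.
Proof. by rewrite divzK // dvdz_mull // core_dvdz. Qed.

Lemma nz_A : A != 0.
Proof.
have : 4 * b ^+ 2 * r1 != 0 by rewrite !mulf_neq0 ?expf_neq0.
by rewrite -A_mul_core mulf_eq0 negb_or => /andP[].
Qed.

Lemma k_sqr_mul_core : k ^+ 2 * core N = N.
Proof. by rewrite def_k divzK // core_dvdz. Qed.

Lemma nz_k : k != 0.
Proof.
by apply: contra_neq nz_N => k0; rewrite -k_sqr_mul_core k0 expr0n mul0r.
Qed.

Lemma logn_gcd_le p : prime p ->
  (logn p (gcdn `|A| `|r1 ^+ 2|) <= logn p `|(u * k) ^+ 2|)%N.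
Proof.
move=> p_pr; rewrite logn_gcd ?absz_gt0 ?nz_A ?expf_neq0 //.
rewrite -![logn p `|_|%N]/(logz p _) !logzX logzM ?nz_k //.
have v_A : (logz p A + logz p r1 %% 2 = logz p 4 + 2 * logz p b + logz p r1)%N.
  have := congr1 (logz p) A_mul_core.
  rewrite logzM ?nz_A ?core_neq0 // logz_core // [logz p (_ * r1)]logzM ?mulf_neq0 ?expf_neq0 //.
  by rewrite [logz p (4 * _)]logzM ?expf_neq0 // logzX.
have v_k : (2 * logz p k + logz p N %% 2 = logz p N)%N.
  have := congr1 (logz p) k_sqr_mul_core.
  by rewrite logzM ?expf_neq0 ?core_neq0 ?nz_k // logz_core // logzX.
have v_N : (logz p r1 + logz p r2 = 2 * logz p u + logz p N)%N.
  have := congr1 (logz p) r1_mul_r2.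
  by rewrite logzM ?nz_r2 // [logz p (u ^+ 2 * _)]logzM ?expf_neq0 // logzX.
have v_4 : logz p 4 = (2 * logn p 2)%N by rewrite /logz (_ : `|4%R|%N = 2 ^ 2)%N // lognX.
have [lt_r2_r1 | le_r1_r2] := ltnP (logz p r2) (logz p r1).
  have := logz_r2 p_pr lt_r2_r1; have := logz_b_le_y p_pr lt_r2_r1.
  by clear -v_A v_k v_N v_4; lia.
by clear -v_A v_k v_N le_r1_r2; lia.
Qed.

Lemma gcdz_dvd_sqr : (gcdz A (r1 ^+ 2) %| (u * k) ^+ 2)%Z.
Proof.
rewrite dvdzE /=; apply: dvdn_from_log => [||p p_pr]; last exact: logn_gcd_le.
  by rewrite gcdn_gt0 absz_gt0 nz_A.
by rewrite absz_gt0 expf_neq0 ?mulf_neq0 ?nz_k.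
Qed.

End GcdBound.

Theorem lemma3p2 (a b d t u x y r1 k : int) :
  a != 0 -> 0 < b -> ~ is_square d ->
  ~ is_square (a ^+ 2 - b ^+ 4 * d) ->
  t != 0 -> u != 0 ->
  ((t%:~R + u%:~R * sqrtC d%:~R) / 2 : algC) \in Aint ->
  x != 0 -> 0 < y ->
  (x%:~R + (y ^+ 2)%:~R * sqrtC d%:~R : algC)
    = (a%:~R + (b ^+ 2)%:~R * sqrtC d%:~R)
      * ((t%:~R + u%:~R * sqrtC d%:~R) / 2) ^+ 2 ->
  (r1 = t * b ^+ 2 + a * u + 2 * b * y \/ r1 = t * b ^+ 2 + a * u - 2 * b * y) ->
  r1 != 0 ->
  0 <= k -> k ^+ 2 = ((a ^+ 2 - b ^+ 4 * d) %/ core (a ^+ 2 - b ^+ 4 * d))%Z ->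
  (gcdz ((4 * b ^+ 2 * r1) %/ core r1)%Z (r1 ^+ 2) %| (- u * k) ^+ 2)%Z.
Proof.
move=> _ b_gt0 nsq_d nsq_N _ nz_u Aint_eps _ y_gt0 def_x def_r1 nz_r1 _ def_k.
have nz_N : a ^+ 2 - b ^+ 4 * d != 0.
  by apply/eqP => N0; apply: nsq_N; exists 0; rewrite N0 expr0n.
rewrite mulNr sqrrN.
apply: (gcdz_dvd_sqr (lt0r_neq0 b_gt0) (lt0r_neq0 y_gt0) nz_u nz_r1 nz_N def_k _ _ def_r1).
  exact: coef_sqrtC_mul_sqr nsq_d def_x.
exact: dvdz_norm_Aint Aint_eps.
Qed.
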